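(* Let $\Sigma=b^2M_nQ\Psi Q^\top M_n\in\mathbb R^{n\times n}$ be the steady-state covariance of the observables (notation in the context), with $n\ge2$. Then for every $i\in\{1,\dots,n\}$, the $(n-1)\times(n-1)$ principal submatrix obtained from $\Sigma$ by deleting its $i$-th row and $i$-th column is invertible; consequently every principal submatrix of $\Sigma$ of size at most $n-1$ is invertible.
   Context: $L$ is the Laplacian of a connected undirected simple graph with positive edge weights, $L=Q\Lambda Q^\top$, $Q=[q_1|\dots|q_n]$ orthogonal, $q_1=\mathbf 1_n/\sqrt n$, $\Lambda=\mathrm{diag}(0,\lambda_2,\dots,\lambda_n)$ with $0<\lambda_2\le\dots\le\lambda_n$; the delay satisfies $0\le\tau<\pi/(2\lambda_n)$; $b\neq0$; $M_n=I_n-\frac1n\mathbf 1_n\mathbf 1_n^\top$; $\Psi=\mathrm{diag}(0,\psi(\lambda_2),\dots,\psi(\lambda_n))$ with $\psi(\lambda)=\frac{\cos(\lambda\tau)}{2\lambda(1-\sin(\lambda\tau))}$. *)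

From HB Require Import structures.
From mathcomp Require Import all_boot all_order all_algebra.
From mathcomp Require Import all_classical all_reals.
From mathcomp Require Import trigo.
Set Implicit Arguments. Unset Strict Implicit. Unset Printing Implicit Defensive.
Import Order.TTheory GRing.Theory Num.Theory.
Local Open Scope ring_scope.

Section Defs.
Variable R : realType.

(* Weighted simple graph on 'I_n given by a weight matrix W:
   W i j > 0 iff {i,j} is an edge (with weight W i j), W i j = 0 otherwise. *)
Definition weighted_simple_graph n (W : 'M[R]_n) : Prop :=
  W^T = W /\ (forall i, W i i = 0) /\ (forall i j, 0 <= W i j).

Definition graph_connected n (W : 'M[R]_n) : Prop :=
  forall i j : 'I_n, connect (fun a b : 'I_n => 0 < W a b) i j.

Definition laplacian n (W : 'M[R]_n) : 'M[R]_n :=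
  \matrix_(i, j) (if i == j then \sum_k W i k else - W i j).

Definition centering n : 'M[R]_n := 1%:M - (n%:R)^-1 *: const_mx 1.

Definition psi (tau lam : R) : R :=
  cos (lam * tau) / (2 * lam * (1 - sin (lam * tau))).

(* Psi = diag(0, psi(lam_2), ..., psi(lam_n)); index 0 is the first one. *)
Definition Psi n (tau : R) (lam : 'I_n -> R) : 'M[R]_n :=
  diag_mx (\row_k (if val k == 0%N then 0 else psi tau (lam k))).

Definition Sigma n (b tau : R) (Q : 'M[R]_n) (lam : 'I_n -> R) : 'M[R]_n :=
  b ^+ 2 *: (centering n *m Q *m Psi tau lam *m Q^T *m centering n).

Definition psubmx n (S : {set 'I_n}) (A : 'M[R]_n) : 'M[R]_#|S| :=
  \matrix_(a, c) A (enum_val a) (enum_val c).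

End Defs.

From HB Require Import structures.
From mathcomp Require Import all_boot all_order all_algebra.
From mathcomp Require Import all_classical all_reals.
From mathcomp Require Import trigo.
From mathcomp Require Import lra.
Import Order.TTheory GRing.Theory Num.Theory.
Set Implicit Arguments. Unset Strict Implicit.
Local Open Scope ring_scope.

(* Sigma = F^T F with F = b Psi^(1/2) Q^T M_n, so the principal submatrix on S
   is the Gram matrix of the columns of F indexed by S; it is invertible as
   soon as F kills no nonzero vector supported in S.  Since psi > 0 on
   (0, pi / (2 lambda_n)), F x = 0 forces all coordinates of Q^T M_n x but the
   first to vanish, and the first vanishes anyway because q_1 is constant and
   M_n x sums to 0.  Hence M_n x = 0, i.e. x is constant, and a constant vector
   vanishing outside a proper subset S of the indices is zero. *)

Section GramMatrix.
Variable R : realFieldType.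

Lemma tr_mul_self_eq0 m (v : 'cV[R]_m) : (v^T *m v) 0 0 = 0 -> v = 0.
Proof.
rewrite mxE; under eq_bigr do rewrite mxE -expr2.
move=> /psumr_eq0P v0; apply/matrixP => i j; rewrite (ord1 j) mxE.
by apply/eqP; rewrite -sqrf_eq0 v0 // => k _; exact: sqr_ge0.
Qed.

Lemma gram_unitmx p m (A : 'M[R]_(p, m)) :
  (forall x : 'cV_m, A *m x = 0 -> x = 0) -> A^T *m A \in unitmx.
Proof.
move=> A_inj; rewrite -row_free_unit; apply/inj_row_free => u uAA0.
have Au0 : A *m u^T = 0.
  apply: tr_mul_self_eq0.
  by rewrite trmx_mul trmxK mulmxA -(mulmxA u) uAA0 mul0mx mxE.
by apply: trmx_inj; rewrite trmx0; exact: A_inj.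
Qed.

End GramMatrix.

Lemma mxsub_scalar_inj (R : pzRingType) m n (f : 'I_m -> 'I_n) (a : R) :
  injective f -> mxsub f f a%:M = a%:M.
Proof. by move=> f_inj; apply/matrixP => i j; rewrite !mxE (inj_eq f_inj). Qed.

Lemma colsub_enum_val_inj (K : fieldType) p n (F : 'M[K]_(p, n))
    (S : {set 'I_n}) :
  (forall x : 'cV_n, F *m x = 0 -> forall i j, x i 0 = x j 0) -> (#|S| < n)%N ->
  forall u : 'cV_#|S|, colsub (enum_val : 'I_#|S| -> 'I_n) F *m u = 0 -> u = 0.
Proof.
move=> F_ker S_small u Fu0.
have /card_gt0P [i] : (0 < #|~: S|)%N.
  by rewrite -(ltn_add2l #|S|) addn0 cardsC card_ord.
rewrite inE => iS.
(* [x] is [u] extended by zero outside [S]. *)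
pose x := colsub (enum_val : 'I_#|S| -> 'I_n) 1%:M *m u.
have xS : rowsub enum_val x = u.
  rewrite /x -mul_rowsub_mx -mxsubrc mxsub_scalar_inj ?mul1mx //.
  exact: enum_val_inj.
have Fx0 : F *m x = 0 by rewrite /x mulmxA mulmx_colsub mulmx1 Fu0.
have xi0 : x i 0 = 0.
  rewrite mxE big1 // => a _; rewrite !mxE.
  have /negbTE -> : i != enum_val a by apply: contraNneq iS => ->; exact: enum_valP.
  by rewrite mulr0n mul0r.
apply/matrixP => a j.
by rewrite (ord1 j) -xS [LHS]mxE /= (F_ker x Fx0 _ i) xi0 mxE.
Qed.

Lemma diag_mx_sqrt_mul (R : rcfType) n (d : 'rV[R]_n) :
  (forall k, 0 <= d 0 k) ->
  diag_mx (map_mx Num.sqrt d) *m diag_mx (map_mx Num.sqrt d) = diag_mx d.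
Proof.
move=> d_ge0; rewrite mulmx_diag; congr diag_mx; apply/rowP => k.
by rewrite !mxE -expr2 sqr_sqrtr.
Qed.

Section Centering.
Variable R : realType.

Lemma trmx_centering n : (centering R n)^T = centering R n.
Proof. by rewrite /centering linearB /= tr_scalar_mx linearZ /= trmx_const. Qed.

Lemma centering_mulE n (x : 'cV[R]_n) i :
  (centering R n *m x) i 0 = x i 0 - n%:R^-1 * \sum_j x j 0.
Proof.
rewrite /centering mulmxBl mul1mx -scalemxAl !mxE; congr (_ - _ * _).
by apply: eq_bigr => j _; rewrite mxE mul1r.
Qed.

Lemma sum_centering_mul n (x : 'cV[R]_n) : \sum_i (centering R n *m x) i 0 = 0.
Proof.
under eq_bigr do rewrite centering_mulE.
rewrite sumrB sumr_const card_ord -[(_ * _) *+ _]mulr_natr.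
case: n x => [|m] x; first by rewrite big_ord0 mulr0 subr0.
by rewrite mulrAC mulVf ?pnatr_eq0 // mul1r subrr.
Qed.

Lemma centering_mul_eq0 n (x : 'cV[R]_n) :
  centering R n *m x = 0 -> forall i j, x i 0 = x j 0.
Proof.
have mean_eq i : centering R n *m x = 0 -> x i 0 = n%:R^-1 * \sum_j x j 0.
  by move=> /colP/(_ i); rewrite centering_mulE mxE => /subr0_eq.
by move=> Mx0 i j; rewrite !mean_eq.
Qed.

End Centering.

Lemma psi_gt0 (R : realType) (tau l : R) :
  0 <= tau -> 0 < l -> l * tau < pi / 2 -> 0 < psi tau l.
Proof.
move=> tau_ge0 l_gt0 lt_pihalf.
have cos_gt0 : 0 < cos (l * tau).
  apply: cos_gt0_pihalf; rewrite lt_pihalf andbT.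
  have := pi_gt0 R; have : 0 <= l * tau by rewrite mulr_ge0 // ltW.
  lra.
have sin_lt1 : sin (l * tau) < 1.
  rewrite lt_neqAle sin_le1 andbT; apply: contraTneq cos_gt0 => sin1.
  by rewrite sin1cos0 ?sin1 ?normr1 // ltxx.
by rewrite /psi divr_gt0 // !mulr_gt0 // subr_gt0.
Qed.

Lemma psubmx_gram (R : realType) p n (F : 'M[R]_(p, n)) (S : {set 'I_n}) :
  psubmx S (F^T *m F) =
  (colsub (enum_val : 'I_#|S| -> 'I_n) F)^T *m colsub enum_val F.
Proof. by rewrite trmx_mxsub -mxsub_mul. Qed.

Section SigmaFactor.
Variables (R : realType) (n : nat) (b tau c : R) (Q : 'M[R]_n) (lam : 'I_n -> R).
Hypothesis b_neq0 : b != 0.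
Hypothesis Q_orthogonal : Q^T *m Q = 1%:M.
Hypothesis Q_col0 : forall i j : 'I_n, val j = 0%N -> Q i j = c.
Hypothesis psi_lam_gt0 : forall k : 'I_n, (0 < val k)%N -> 0 < psi tau (lam k).

Let psi_row : 'rV[R]_n := \row_k (if val k == 0%N then 0 else psi tau (lam k)).

Definition Sigma_factor : 'M[R]_n :=
  b *: (diag_mx (map_mx Num.sqrt psi_row) *m Q^T *m centering R n).

Lemma Sigma_factorE : Sigma b tau Q lam = Sigma_factor^T *m Sigma_factor.
Proof.
have psi_row_ge0 k : 0 <= psi_row 0 k.
  rewrite mxE; case: ifP => [_|/negbT k_neq0]; first exact: lexx.
  by apply/ltW/psi_lam_gt0; rewrite lt0n.
rewrite /Sigma /Sigma_factor !linearZ /= -scalemxAl scalerA -expr2; congr (_ *: _).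
rewrite !trmx_mul trmxK tr_diag_mx trmx_centering.
by rewrite /Psi -/psi_row -diag_mx_sqrt_mul // !mulmxA.
Qed.

Lemma Sigma_factor_ker (x : 'cV_n) :
  Sigma_factor *m x = 0 -> forall i j, x i 0 = x j 0.
Proof.
move=> Fx0; apply: centering_mul_eq0.
pose y := Q^T *m (centering R n *m x).
suff y0 : y = 0.
  by rewrite -[_ *m x]mul1mx -(mulmx1C Q_orthogonal) -mulmxA -/y y0 mulmx0.
apply/matrixP => k j; rewrite (ord1 j) [RHS]mxE.
have [k0|k_gt0] := posnP (val k).
  rewrite mxE; under eq_bigr do rewrite mxE (Q_col0 _ k0).
  by rewrite -mulr_sumr sum_centering_mul mulr0.
have Dy0 : diag_mx (map_mx Num.sqrt psi_row) *m y = 0.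
  move: Fx0; rewrite /Sigma_factor -!scalemxAl => /eqP.
  by rewrite scalemx_eq0 (negbTE b_neq0) /= /y !mulmxA => /eqP.
move: Dy0 => /colP/(_ k)/eqP.
rewrite mul_diag_mx !mxE mulf_eq0 (negbTE (lt0n_neq0 k_gt0)) => /orP [|/eqP //].
by rewrite sqrtr_eq0 leNgt psi_lam_gt0.
Qed.

Lemma psubmx_Sigma_unitmx (S : {set 'I_n}) :
  (#|S| < n)%N -> psubmx S (Sigma b tau Q lam) \in unitmx.
Proof.
move=> S_small; rewrite Sigma_factorE psubmx_gram; apply: gram_unitmx.
exact: colsub_enum_val_inj Sigma_factor_ker S_small.
Qed.

End SigmaFactor.

Theorem lemma2 (R : realType) (n : nat) (W Q : 'M[R]_n) (lam : 'I_n -> R)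
    (tau b : R) :
  (2 <= n)%N ->
  weighted_simple_graph W -> graph_connected W ->
  Q^T *m Q = 1%:M ->
  laplacian W = Q *m diag_mx (\row_k lam k) *m Q^T ->
  (forall i j : 'I_n, val j = 0%N -> Q i j = 1 / Num.sqrt (n%:R)) ->
  (forall k : 'I_n, val k = 0%N -> lam k = 0) ->
  (forall k : 'I_n, (0 < val k)%N -> 0 < lam k) ->
  (forall k l : 'I_n, (val k <= val l)%N -> lam k <= lam l) ->
  0 <= tau ->
  (forall k : 'I_n, val k = n.-1 -> tau < pi / (2 * lam k)) ->
  b != 0 ->
  (forall i : 'I_n, psubmx (~: [set i]) (Sigma b tau Q lam) \in unitmx) /\
  (forall S : {set 'I_n}, (#|S| <= n.-1)%N ->
     psubmx S (Sigma b tau Q lam) \in unitmx).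
Proof.
move=> n_ge2 _ _ Q_orth _ Q_col0 _ lam_gt0 lam_mono tau_ge0 tau_lt b_neq0.
have n_gt0 : (0 < n)%N := ltnW n_ge2.
have lt_last : (n.-1 < n)%N by rewrite ltn_predL.
pose lmax : 'I_n := Ordinal lt_last.
have psi_lam_gt0 k : (0 < val k)%N -> 0 < psi tau (lam k).
  move=> k_gt0; apply: psi_gt0 => //; first exact: lam_gt0.
  have lmax_gt0 : 0 < lam lmax by apply: lam_gt0; rewrite /= -ltnS prednK.
  have le_lmax : lam k <= lam lmax by apply: lam_mono; rewrite /= -ltnS prednK.
  have := tau_lt lmax erefl; rewrite ltr_pdivlMr ?mulr_gt0 // => lt_pi.
  have : lam k * tau <= lam lmax * tau by rewrite ler_wpM2r.
  lra.
have unit_small := psubmx_Sigma_unitmx b_neq0 Q_orth Q_col0 psi_lam_gt0.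
split => [i | S S_le]; apply: unit_small.
  by rewrite cardsC1 card_ord ltn_predL.
exact: leq_ltn_trans S_le lt_last.
Qed.
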